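(* In Algorithm MV (see context), WHP every correct process decides.
   Context: System and adversary: a well-known static set $\Pi$ of $n$ processes; an adversary may adaptively corrupt up to $f=(\frac13-\epsilon)n$ processes during a run, where $\frac{1}{2\ln n}<\epsilon<\frac13$. Corrupted (Byzantine) processes may deviate arbitrarily; uncorrupted processes are correct. Once the adversary corrupts a process it cannot replace messages that process already sent while correct. Every pair of processes is connected by a reliable authenticated link; the network is asynchronous. There is a trusted PKI; the adversary is computationally bounded; $\langle v\rangle_i$ denotes $v$ signed by $p_i$. Validated committee sampling: each $p_i$ has a private function $\mathit{sample}_i(s,\lambda)$ returning $\langle v_i,\sigma_i\rangle$ with $v_i\in\{\mathit{true},\mathit{false}\}$ ($p_i$ is ''sampled'' iff $v_i=\mathit{true}$, probability $\lambda/n$) and an unforgeable publicly verifiable proof $\sigma_i$; ''validly sampled $p_j$'' means the message carries a valid such proof. Let $C(s,\lambda)$ be the committee for $s,\lambda$. Parameters: $\lambda=8\ln n$; $\frac1\lambda<d<\frac\epsilon3-\frac1{3\lambda}$; $W=\lceil(\frac23+3d)\lambda\rceil$, $B=\lfloor(\frac13-d)\lambda\rfloor$. Assumed WHP for each committee: (S3) at least $W$ members are correct; (S4) at most $B$ members are Byzantine; (S5) any two $W$-subsets of the committee intersect in at least $B+1$ processes. WHP means with probability tending to $1$ as $n\to\infty$. The binary BA used is a black-box Binary Strong BA WHP: WHP strong unanimity (if all correct processes propose the same bit, any deciding correct process decides it), agreement, and termination. Algorithm MV (code for $p_i$ with input $v_i$; local: $\mathit{count}=0$, empty sets $\mathit{init\text{-}set},\mathit{init\text{-}values\text{-}set},\mathit{converge\text{-}set}$):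 (1) If $p_i$ is sampled for $(\textsc{init},\lambda)$, broadcast $\langle\textsc{init},v_i\rangle_i$. (2) On receiving $\langle\textsc{init},v_j\rangle_j$ from validly sampled $p_j$: add $j$ to $\mathit{init\text{-}set}$, $v_j$ to $\mathit{init\text{-}values\text{-}set}$. If $p_i$ is sampled for $(\textsc{converge},\lambda)$ and $|\mathit{init\text{-}set}|=W$ for the first time: if $\mathit{init\text{-}values\text{-}set}=\{v_i\}$, batch the $W$ signed \textsc{init} messages into $QC_{v_i}$ and send $\langle\textsc{converge},\mathit{true},QC_{v_i}\rangle_i$ to all; else send $\langle\textsc{converge},\mathit{false},\bot\rangle_i$ to all. (3) On receiving $\langle\textsc{converge},\mathit{is\_content},QC_v\rangle_j$ from validly sampled $p_j$: add $j$ to $\mathit{converge\text{-}set}$; if $\mathit{is\_content}=\mathit{true}$ increment $\mathit{count}$. When $|\mathit{converge\text{-}set}|=W$ for the first time: $\mathit{alert}\gets(\mathit{count}<B+1)$; run binary BA on $\mathit{alert}$; if the output is $\mathit{true}$ decide $\bot$; else wait for some $\langle\textsc{converge},\mathit{true},QC_v\rangle_j$ from a validly sampled $p_j$ and decide $v$. A valid $QC_v$ consists of $W$ signed \textsc{init} messages on $v$ from $W$ distinct validly sampled processes. *)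

From HB Require Import structures.
From mathcomp Require Import all_boot all_order all_algebra.
From mathcomp Require Import all_classical all_reals all_analysis.

Set Implicit Arguments.
Unset Strict Implicit.
Unset Printing Implicit Defensive.

Import Order.TTheory GRing.Theory Num.Theory.

(* Processes are 'I_n.  A run of Algorithm MV (one execution, for a fixed   *)
(* adversary / scheduler / sampling outcome) is described by the record     *)
(* [run] below; [execution] states that the run is a legal execution of MV   *)
(* in the model of the paper (asynchronous reliable authenticated links,     *)
(* Byzantine processes, unforgeable signatures and sampling proofs).         *)

Section MV.
Variables (n : nat) (V : eqType).
Local Notation proc := 'I_n.

(* Payload of the messages of MV.  A quorum certificate QC_v is represented *)
(* by the value v together with the list of the W signers of the batched    *)
(* INIT messages on v.                                                      *)
Inductive payload : Type :=
  | PInit of V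
  | PConv of bool & option (V * seq proc).

Record run : Type := Run {
  input    : proc -> V;
  faulty   : {set proc};           (* processes corrupted at some point    *)
  samp_init : proc -> bool;        (* first component of sample_i(INIT,lam) *)
  samp_conv : proc -> bool;        (* same for (CONVERGE,lam)               *)
  sig_init : proc -> V -> bool;    (* a valid signature <INIT,v>_j exists   *)
  recv     : proc -> nat -> option (proc * payload);
        (* recv i t = Some (j, p): the t-th delivery step of p_i delivers   *)
        (* payload p on the authenticated link from p_j                     *)
  ba_out   : proc -> option bool
}.

Variable r : run.

Definition correct (i : proc) : bool := i \notin faulty r.

Definition dels (i : proc) (t : nat) : seq (proc * payload) :=
  pmap id (map (recv r i) (iota 0 t)).

(* only the first message of a given kind from each sender is handled *)
Fixpoint firsts_aux {X : Type} (seen : seq proc) (s : seq (proc * X))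
  : seq (proc * X) :=
  match s with
  | [::] => [::]
  | x :: s' => if x.1 \in seen then firsts_aux seen s'
               else x :: firsts_aux (x.1 :: seen) s'
  end.
Definition firsts {X : Type} (s : seq (proc * X)) := firsts_aux [::] s.

Definition init_of (m : proc * payload) : option (proc * V) :=
  match m with
  | (j, PInit v) => if samp_init r j then Some (j, v) else None
  | _ => None
  end.
Definition conv_of (m : proc * payload)
  : option (proc * (bool * option (V * seq proc))) :=
  match m with
  | (j, PConv b q) => if samp_conv r j then Some (j, (b, q)) else None
  | _ => None
  end.

Definition init_msgs i t := firsts (pmap init_of (dels i t)).
Definition init_set i t : seq proc := map fst (init_msgs i t).
Definition init_values_set i t : seq V := undup (map snd (init_msgs i t)).

Definition conv_msgs i t := firsts (pmap conv_of (dels i t)).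
Definition converge_set i t : seq proc := map fst (conv_msgs i t).
Definition count_true i t : nat := count (fun m => m.2.1) (conv_msgs i t).

Definition first_time (P : nat -> bool) (t : nat) : Prop :=
  P t /\ forall t', t' < t -> ~~ P t'.

Definition valid_qc (W : nat) (v : V) (s : seq proc) : bool :=
  [&& size s == W, uniq s, all (samp_init r) s & all (fun j => sig_init r j v) s].

(* the payloads that the code of MV makes p_j broadcast (to all processes) *)
Definition sends (W : nat) (j : proc) (p : payload) : Prop :=
  (samp_init r j /\ p = PInit (input r j)) \/
  (samp_conv r j /\ exists T, first_time (fun t => size (init_set j t) == W) T /\
     p = if init_values_set j T == [:: input r j]
         then PConv true (Some (input r j, init_set j T))
         else PConv false None).

Definition ba_invoked (W : nat) (i : proc) : Prop :=
  exists T, size (converge_set i T) == W.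

Definition ba_input (W B : nat) (i : proc) (b : bool) : Prop :=
  exists T, first_time (fun t => size (converge_set i t) == W) T /\
            b = (count_true i T < B.+1).

(* p_i decides (bot if BA outputs true, or some v carried by a valid QC) *)
Definition decides (W : nat) (i : proc) : Prop :=
  ba_out r i = Some true \/
  (ba_out r i = Some false /\
   exists t j v s, recv r i t = Some (j, PConv true (Some (v, s))) /\
                   samp_conv r j /\ valid_qc W v s).

Definition execution {R : realType} (W : nat) (f : R) : Prop :=
  (#|faulty r|%:R <= f)%R /\ [/\
      (* unforgeability: a correct process signs INIT only on its input *)
      (forall j v, correct j -> sig_init r j v -> v = input r j),
      (forall i t j v, correct i -> recv r i t = Some (j, PInit v) -> sig_init r j v),
      (* authenticated links: what a correct p_i receives from a correct p_j *)
      (* was sent by p_j according to the code                                *)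
      (forall i t j p, correct i -> correct j -> recv r i t = Some (j, p) -> sends W j p),
      (* reliable links: messages sent by correct processes reach all correct *)
      (forall i j p, correct i -> correct j -> sends W j p ->
                     exists t, recv r i t = Some (j, p)) &
      (forall i, correct i -> ba_out r i != None -> ba_invoked W i)].

Definition committee (samp : proc -> bool) : {set proc} := [set j | samp j].

Definition S3 (W : nat) (samp : proc -> bool) : Prop :=
  W <= #|[set j in committee samp | correct j]|.
Definition S4 (B : nat) (samp : proc -> bool) : Prop :=
  #|[set j in committee samp | ~~ correct j]| <= B.
Definition S5 (W B : nat) (samp : proc -> bool) : Prop :=
  forall A1 A2 : {set proc}, A1 \subset committee samp -> A2 \subset committee samp ->
    #|A1| = W -> #|A2| = W -> B.+1 <= #|A1 :&: A2|.

Definition BA_termination (W : nat) : Prop :=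
  (forall i, correct i -> ba_invoked W i) -> forall i, correct i -> ba_out r i != None.
Definition BA_agreement : Prop :=
  forall i k b b', correct i -> correct k -> ba_out r i = Some b -> ba_out r k = Some b' ->
    b = b'.
Definition BA_strong_unanimity (W B : nat) : Prop :=
  forall b, (forall i, correct i -> ba_input W B i b) ->
    forall i b', correct i -> ba_out r i = Some b' -> b' = b.

End MV.

Arguments PInit {n V}.
Arguments PConv {n V}.

Section Params.
Variable R : realType.
Local Open Scope ring_scope.
Definition lam (n : nat) : R := 8 * ln (n%:R).
Definition Wpar (d : R) (n : nat) : nat := `|Num.ceil ((2/3 + 3 * d) * lam n)|%N.
Definition Bpar (d : R) (n : nat) : nat := `|Num.floor ((1/3 - d) * lam n)|%N.
Definition fpar (eps : R) (n : nat) : R := (1/3 - eps) * n%:R.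
End Params.

Local Open Scope classical_set_scope.
Local Open Scope ring_scope.
Definition whp {R : realType} {dsp : nat -> measure_display}
    {Om : forall n, measurableType (dsp n)} (P : forall n, probability (Om n) R)
    (E : forall n, set (Om n)) : Prop :=
  exists A : forall n, set (Om n),
    (forall n, measurable (A n) /\ (A n `<=` E n)%classic) /\
    ((fun n => P n (A n)) @ \oo --> (1%:E : \bar R)).

From HB Require Import structures.
From mathcomp Require Import all_boot all_order all_algebra.
From mathcomp Require Import all_classical all_reals all_analysis.
From mathcomp Require Import lra.
Import Order.TTheory GRing.Theory Num.Theory.
Import numFieldNormedType.Exports.

Set Implicit Arguments.
Unset Strict Implicit.
Unset Printing Implicit Defensive.

(*   The argument is deterministic on every run satisfying S3 for both        *)
(* committees, S4 for the CONVERGE committee, strong unanimity and            *)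
(* termination of the binary BA; the probabilistic statement then follows     *)
(* because WHP events are closed under finite intersection and weakening     *)
(* .     *)
(*   Deterministic part: since the number of distinct senders seen grows by   *)
(* at most one per delivery, and the W correct members of a committee are     *)
(* eventually all heard from (reliable links), every correct process reaches  *)
(* |init-set| = W, hence sends CONVERGE, hence every correct process reaches  *)
(* |converge-set| = W and invokes the BA, which terminates.  If the BA output *)
(* at p_i is false, strong unanimity yields a correct p_k with alert = false, *)
(* i.e. at least B+1 content CONVERGE messages; by S4 one comes from a        *)
(* correct p_j, whose QC is valid and reaches p_i: p_i decides.               *)

Section DistinctSenders.
Variable n : nat.
Local Notation proc := 'I_n.

Lemma mem_firsts_aux (X : Type) (seen : seq proc) (s : seq (proc * X)) j :
  (j \in map fst (firsts_aux seen s)) = (j \in map fst s) && (j \notin seen).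
Proof.
elim: s seen => [|x s IH] seen //=.
case: ifP => hx.
  by rewrite IH in_cons; case: (j =P x.1) => [->|_] //=; rewrite hx !andbF.
by rewrite /= in_cons IH !in_cons; case: (j =P x.1) => [->|_] //=; rewrite hx.
Qed.

Lemma uniq_firsts_aux (X : Type) (seen : seq proc) (s : seq (proc * X)) :
  uniq (map fst (firsts_aux seen s)).
Proof.
elim: s seen => [|x s IH] seen //=.
by case: ifP => hx //=; rewrite IH mem_firsts_aux in_cons eqxx andbF.
Qed.

Lemma firsts_aux_sub (X : eqType) (seen : seq proc) (s : seq (proc * X)) x :
  x \in firsts_aux seen s -> x \in s.
Proof.
elim: s seen => [|y s IH] seen //=.
case: ifP => _; first by move/IH; rewrite in_cons orbC => ->.
by rewrite !in_cons => /orP [->|/IH ->] //; rewrite orbT.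
Qed.

Lemma size_firsts (X : Type) (s : seq (proc * X)) :
  size (firsts s) = size (undup (map fst s)).
Proof.
rewrite -(size_map fst); apply: perm_size; apply: uniq_perm.
- exact: uniq_firsts_aux.
- exact: undup_uniq.
- by move=> j; rewrite mem_undup mem_firsts_aux andbT.
Qed.

Lemma size_firsts_step (X : Type) (h : nat -> option (proc * X)) t :
  size (firsts (pmap h (iota 0 t.+1))) <= (size (firsts (pmap h (iota 0 t)))).+1.
Proof.
rewrite !size_firsts -addn1 iotaD pmap_cat map_cat undup_cat size_cat addnC.
rewrite -[X in _ <= X]add1n; apply: leq_add; last by rewrite size_filter count_size.
by rewrite /= add0n; case: (h t).
Qed.

Lemma deliveries_bounded (X : Type) (h : nat -> option (proc * X)) (l : seq proc) :
  (forall j, j \in l -> exists u x, h u = Some (j, x)) ->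
  exists T, forall j, j \in l -> exists u x, u < T /\ h u = Some (j, x).
Proof.
elim: l => [|a l IH] H; first by exists 0.
have [T HT] : exists T, forall j, j \in l -> exists u x, u < T /\ h u = Some (j, x).
  by apply: IH => j jl; apply: H; rewrite in_cons jl orbT.
have [u [x hu]] := H a (mem_head _ _).
exists (maxn T u.+1) => j; rewrite in_cons => /orP [/eqP ->|/HT [v [y [lt hv]]]].
  by exists u, x; split => //; rewrite leq_max leqnn orbT.
by exists v, y; split => //; rewrite leq_max lt.
Qed.

Lemma firsts_eventually_cover (X : eqType) (h : nat -> option (proc * X))
    (S : {set proc}) :
  (forall j, j \in S -> exists u x, h u = Some (j, x)) ->
  exists T, #|S| <= size (firsts (pmap h (iota 0 T))).
Proof.
move=> H; have [T HT] : exists T,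
    forall j, j \in enum S -> exists u x, u < T /\ h u = Some (j, x).
  by apply: deliveries_bounded => j; rewrite mem_enum; exact: H.
exists T; rewrite -(size_map fst).
set L := map fst _.
apply: (leq_trans _ (card_size L)); apply: subset_leq_card.
apply/fintype.subsetP => j jS; rewrite /L mem_firsts_aux andbT.
have [u [x [lt hu]]] : exists u x, u < T /\ h u = Some (j, x).
  by apply: HT; rewrite mem_enum.
by apply/mapP; exists (j, x) => //; rewrite mem_pmap -hu map_f // mem_iota.
Qed.

End DistinctSenders.

Lemma unit_steps_first_hit (f : nat -> nat) (W : nat) :
  f 0 = 0 -> (forall t, f t.+1 <= (f t).+1) -> (exists T, W <= f T) ->
  exists T, first_time (fun t => f t == W) T.
Proof.
move=> f0 fS ex; case: (ex_minnP ex) => T hT hmin; exists T; split => /=.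
  case: T hT hmin => [|T] hT hmin; first by move: hT; rewrite f0 leqn0 => /eqP ->.
  have lt : f T < W by rewrite ltnNge; apply/negP => /hmin; rewrite ltnn.
  by rewrite eqn_leq hT andbT (leq_trans (fS T) lt).
move=> t' lt; apply/negP => /eqP e.
by have := hmin t'; rewrite e leqnn => /(_ isT); rewrite leqNgt lt.
Qed.

Section RunFacts.
Variables (n : nat) (V : eqType) (r : run n V).
Local Notation proc := 'I_n.

Lemma pmap_dels (Y : Type) (f : proc * payload n V -> option Y) i t :
  pmap f (dels r i t) = pmap (fun u => obind f (recv r i u)) (iota 0 t).
Proof.
rewrite /dels; elim: (iota 0 t) => //= u l IH.
by case: (recv r i u) => [m|] //=; rewrite IH.
Qed.

Lemma init_msgs_mem i t m : m \in init_msgs r i t ->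
  exists u, recv r i u = Some (m.1, PInit m.2) /\ samp_init r m.1.
Proof.
rewrite /init_msgs pmap_dels => /firsts_aux_sub; rewrite mem_pmap => /mapP [u _].
case E: (recv r i u) => [[j [v|//]]|//] /=.
by case sj: (samp_init r j) => //= -[->]; exists u.
Qed.

Lemma conv_msgs_mem i t m : m \in conv_msgs r i t ->
  exists u, recv r i u = Some (m.1, PConv m.2.1 m.2.2) /\ samp_conv r m.1.
Proof.
rewrite /conv_msgs pmap_dels => /firsts_aux_sub; rewrite mem_pmap => /mapP [u _].
case E: (recv r i u) => [[j [//|b q]]|//] /=.
by case sj: (samp_conv r j) => //= -[->]; exists u.
Qed.

Lemma init_set_unit_steps i :
  size (init_set r i 0) = 0 /\
  forall t, size (init_set r i t.+1) <= (size (init_set r i t)).+1.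
Proof.
rewrite /init_set /init_msgs; split=> [|t]; first by rewrite pmap_dels.
by rewrite !size_map !pmap_dels; exact: size_firsts_step.
Qed.

Lemma converge_set_unit_steps i :
  size (converge_set r i 0) = 0 /\
  forall t, size (converge_set r i t.+1) <= (size (converge_set r i t)).+1.
Proof.
rewrite /converge_set /conv_msgs; split=> [|t]; first by rewrite pmap_dels.
by rewrite !size_map !pmap_dels; exact: size_firsts_step.
Qed.

Definition conv_payload (j : proc) (T : nat) : payload n V :=
  if init_values_set r j T == [:: input r j]
  then PConv true (Some (input r j, init_set r j T))
  else PConv false None.

Lemma sends_conv_payload W j T :
  samp_conv r j -> first_time (fun t => size (init_set r j t) == W) T ->
  sends r W j (conv_payload j T).
Proof. by move=> sj ft; right; split => //; exists T. Qed.

End RunFacts.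

Section Decision.
Variables (n : nat) (V : eqType) (r : run n V) (W B : nat).
Local Notation proc := 'I_n.

Hypothesis init_signed : forall i t j v,
  correct r i -> recv r i t = Some (j, PInit v) -> sig_init r j v.
Hypothesis authentic : forall i t j p,
  correct r i -> correct r j -> recv r i t = Some (j, p) -> sends r W j p.
Hypothesis reliable : forall i j p,
  correct r i -> correct r j -> sends r W j p -> exists t, recv r i t = Some (j, p).
Hypothesis S3_init : S3 r W (samp_init r).
Hypothesis S3_conv : S3 r W (samp_conv r).

(* Every correct process hears INIT from the W correct INIT-committee members. *)
Lemma init_quorum_reached j : correct r j ->
  exists T, first_time (fun t => size (init_set r j t) == W) T.
Proof.
move=> cj; have [f0 fS] := init_set_unit_steps r j.
apply: unit_steps_first_hit f0 fS _.
pose h u := obind (init_of r) (recv r j u).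
have [T HT] : exists T,
    #|[set k in committee (samp_init r) | correct r k]| <= size (firsts (pmap h (iota 0 T))).
  apply: firsts_eventually_cover => k; rewrite !inE => /andP [sk ck].
  have [u hu] := reliable cj ck (or_introl (conj sk erefl)).
  by exists u, (input r k); rewrite /h hu /= sk.
by exists T; rewrite /init_set /init_msgs size_map pmap_dels (leq_trans S3_init HT).
Qed.

(* Every correct process hears CONVERGE from the W correct CONVERGE-committee *)
(* members, each of which sends once its own init-set is full.               *)
Lemma converge_quorum_reached i : correct r i ->
  exists T, first_time (fun t => size (converge_set r i t) == W) T.
Proof.
move=> ci; have [f0 fS] := converge_set_unit_steps r i.
apply: unit_steps_first_hit f0 fS _.
pose h u := obind (conv_of r) (recv r i u).
have [T HT] : exists T,
    #|[set k in committee (samp_conv r) | correct r k]| <= size (firsts (pmap h (iota 0 T))).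
  apply: firsts_eventually_cover => k; rewrite !inE => /andP [sk ck].
  have [T0 ft] := init_quorum_reached ck.
  have [u hu] := reliable ci ck (sends_conv_payload sk ft).
  rewrite /conv_payload in hu; case: ifP hu => _ hu.
  - by exists u, (true, Some (input r k, init_set r k T0)); rewrite /h hu /= sk.
  - by exists u, (false, None); rewrite /h hu /= sk.
by exists T; rewrite /converge_set /conv_msgs size_map pmap_dels (leq_trans S3_conv HT).
Qed.

Lemma all_invoke_ba k : correct r k -> ba_invoked r W k.
Proof. by move=> /converge_quorum_reached [T [HT _]]; exists T. Qed.

(* A content CONVERGE message sent by a correct process carries a valid QC: *)
(* its sender saw W distinct sampled INIT messages, all on its own value.   *)
Lemma correct_content_qc j q : correct r j -> sends r W j (PConv true q) ->
  exists v s, q = Some (v, s) /\ valid_qc r W v s.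
Proof.
move=> cj [[_ //]|[_ [T [ft e]]]].
case: ifP e => [/eqP content [->]|_ //]; exists (input r j), (init_set r j T).
split => //; apply/and4P; split; first by case: ft.
- exact: uniq_firsts_aux.
- by apply/allP => k /mapP [m hm ->]; have [u [_ ?]] := init_msgs_mem hm.
- apply/allP => k /mapP [m hm ->]; have [u [hu _]] := init_msgs_mem hm.
  have : m.2 \in init_values_set r j T by rewrite mem_undup map_f.
  by rewrite content inE => /eqP <-; exact: init_signed cj hu.
Qed.

Hypothesis S4_conv : S4 r B (samp_conv r).

Lemma correct_content_sender k T : B < count_true r k T ->
  exists2 m, m \in conv_msgs r k T & m.2.1 && correct r m.1.
Proof.
move=> cnt; apply/hasP; rewrite -[has _ _]negbK; apply/negP => /hasPn none.
pose L := [seq m <- conv_msgs r k T | m.2.1].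
have uL : uniq (map fst L).
  exact: subseq_uniq (map_subseq _ (filter_subseq _ _)) (uniq_firsts_aux _ _).
have sub : [set j in map fst L] \subset [set j in committee (samp_conv r) | ~~ correct r j].
  apply/fintype.subsetP => j; rewrite inE => /mapP [m]; rewrite mem_filter.
  move=> /andP [mt mc] ->; have [_ [_ sm]] := conv_msgs_mem mc.
  by have := none m mc; rewrite mt !inE sm.
have := leq_trans (subset_leq_card sub) S4_conv.
by rewrite cardsE (card_uniqP uL) size_map size_filter leqNgt cnt.
Qed.

Hypothesis unanimity : BA_strong_unanimity r W B.
Hypothesis termination : BA_termination r W.

Lemma ba_false_has_content_witness i : correct r i -> ba_out r i = Some false ->
  exists k T, correct r k /\ B < count_true r k T.
Proof.
move=> ci bi.
have [[k [ck nk]]|all_alert] :=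
  pselect (exists k, correct r k /\ ~ ba_input r W B k true); last first.
  suff : false = true by [].
  apply: unanimity bi => // k ck; apply: contrapT => nk; apply: all_alert.
  by exists k.
have [T ft] := converge_quorum_reached ck.
exists k, T; split => //; rewrite ltnNge; apply/negP => le.
by apply: nk; exists T; split.
Qed.

Theorem correct_processes_decide i : correct r i -> decides r W i.
Proof.
move=> ci; have := termination all_invoke_ba ci.
case bi: (ba_out r i) => [[]|//] _; [by left | right; split => //].
have [k [T [ck cnt]]] := ba_false_has_content_witness ci bi.
have [[j [[] q]] mc //= cj] := correct_content_sender cnt.
have [u [/= hu sj]] := conv_msgs_mem mc.
have sent := authentic ck cj hu.
have [v [s [eq_q qc]]] := correct_content_qc cj sent.
have [t ht] := reliable ci cj sent.
by exists t, j, v, s; rewrite ht -eq_q.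
Qed.

End Decision.

Local Open Scope classical_set_scope.
Local Open Scope ring_scope.

Lemma whp_mono {R : realType} {dsp : nat -> measure_display}
    {Om : forall n, measurableType (dsp n)} (P : forall n, probability (Om n) R)
    (E1 E2 : forall n, set (Om n)) :
  (forall n w, E1 n w -> E2 n w) -> whp P E1 -> whp P E2.
Proof.
move=> H [A [HA cv]]; exists A; split=> // n; have [mA sA] := HA n.
by split=> // w /sA /H.
Qed.

Lemma prob_and_bounds {R : realType} d (T : measurableType d) (Q : probability T R)
    (X Y : set T) : measurable X -> measurable Y ->
  fine (Q X) + fine (Q Y) - 1 <= fine (Q (X `&` Y)) <= 1.
Proof.
move=> mX mY.
have mI : measurable (X `&` Y) by exact: measurableI.
have mU : measurable (X `|` Y) by exact: measurableU.
have hU : Q (X `|` Y) = (Q X + Q Y - Q (X `&` Y))%E.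
  by apply: measureUfinl; rewrite // ltey_eq fin_num_measure.
have le1U : (Q (X `|` Y) <= 1)%E by exact: probability_le1.
have le1I : (Q (X `&` Y) <= 1)%E by exact: probability_le1.
have fin Z : measurable Z -> Q Z = (fine (Q Z))%:E.
  by move=> mZ; rewrite fineK // fin_num_measure.
move: hU le1U le1I; rewrite (fin _ mX) (fin _ mY) (fin _ mI) (fin _ mU).
rewrite -!EFinD !lee_fin => -[hU] le1U le1I.
apply/andP; split; lra.
Qed.

(* WHP events are closed under binary intersection (squeeze between the *)
(* union bound and 1).                                                   *)
Lemma whp_and {R : realType} {dsp : nat -> measure_display}
    {Om : forall n, measurableType (dsp n)} (P : forall n, probability (Om n) R)
    (E1 E2 : forall n, set (Om n)) :
  whp P E1 -> whp P E2 -> whp P (fun n w => E1 n w /\ E2 n w).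
Proof.
move=> [A [HA cA]] [B [HB cB]].
have mA n : measurable (A n) by case: (HA n).
have mB n : measurable (B n) by case: (HB n).
exists (fun n => A n `&` B n); split.
  move=> n; have [_ sA] := HA n; have [_ sB] := HB n.
  by split; [exact: measurableI | move=> w [/sA ? /sB ?]].
apply/fine_cvgP; split.
  by near=> k; rewrite fin_num_measure //; exact: measurableI.
move/fine_cvgP: cA => [_ cA]; move/fine_cvgP: cB => [_ cB].
have lower : (fun k => fine (P k (A k)) + fine (P k (B k)) - 1) @ \oo --> (1:R).
  by have := cvgB (cvgD cA cB) (cvg_cst (1:R)); rewrite addrK; apply.
apply: (squeeze_cvgr _ lower (cvg_cst _)).
by near=> k; exact: prob_and_bounds.
Unshelve. all: end_near.
Qed.

Theorem mainTheorem4 (R : realType) (V : eqType) (eps d : R)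
    (dsp : nat -> measure_display) (Om : forall n, measurableType (dsp n))
    (P : forall n, probability (Om n) R)
    (run_of : forall n, Om n -> run n V) :
  (* parameter constraints (for all sufficiently large n) *)
  (\forall n \near \oo,
      1 / (2 * ln (n%:R : R)) < eps < 1 / 3 /\
      1 / lam R n < d < eps / 3 - 1 / (3 * lam R n)) ->
  (* every outcome is a legal execution of Algorithm MV *)
  (forall n (w : Om n), execution (run_of n w) (Wpar d n) (fpar eps n)) ->
  (* committee assumptions S3, S4, S5, WHP, for both committees *)
  whp P (fun n w => S3 (run_of n w) (Wpar d n) (samp_init (run_of n w))) ->
  whp P (fun n w => S3 (run_of n w) (Wpar d n) (samp_conv (run_of n w))) ->
  whp P (fun n w => S4 (run_of n w) (Bpar d n) (samp_init (run_of n w))) ->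
  whp P (fun n w => S4 (run_of n w) (Bpar d n) (samp_conv (run_of n w))) ->
  whp P (fun n w => S5 (Wpar d n) (Bpar d n) (samp_init (run_of n w))) ->
  whp P (fun n w => S5 (Wpar d n) (Bpar d n) (samp_conv (run_of n w))) ->
  (* the black-box Binary Strong BA, WHP *)
  whp P (fun n w => BA_strong_unanimity (run_of n w) (Wpar d n) (Bpar d n)) ->
  whp P (fun n w => BA_agreement (run_of n w)) ->
  whp P (fun n w => BA_termination (run_of n w) (Wpar d n)) ->
  (* conclusion: WHP every correct process decides *)
  whp P (fun n w => forall i : 'I_n, correct (run_of n w) i ->
                                     decides (run_of n w) (Wpar d n) i).
Proof.
move=> _ hexec s3i s3c _ s4c _ _ hunan _ hterm.
have good := whp_and s3i (whp_and s3c (whp_and s4c (whp_and hunan hterm))).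
apply: whp_mono good => n w [s3i' [s3c' [s4c' [hunan' hterm']]]].
have [_ [_ signed auth rel _]] := hexec n w.
exact: correct_processes_decide signed auth rel s3i' s3c' s4c' hunan' hterm'.
Qed.
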